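(* Let $M$ be a finite $\mathscr R$-trivial monoid and $k$ a field. The vertex set of $Q(kM)$ is $\Lambda(M)$. Let $X,Y\in\Lambda(M)$ with idempotent generators $e_X,e_Y$, and let $\equiv$ be the least equivalence relation on $e_YMe_X$ such that (a) $e_Ymne_X\equiv e_Yme_X$ whenever $\sigma(m)\not\ge Y$ and $\sigma(n)\ge X$; (b) $z\equiv z'$ for all $z,z'\in\nabla Y\nabla X$ (lying in $e_YMe_X$). Let $Z_{X,Y}$ be the complement of the class of $\nabla Y\nabla X$ in $e_YMe_X/{\equiv}$. (1) If $X$ and $Y$ are incomparable, the number of arrows from $X$ to $Y$ is $|Z_{X,Y}|$. (2) In all other cases there are $|Z_{X,Y}|-1$ arrows from $X$ to $Y$.
   Context: $M$ is $\mathscr R$-trivial if $mM=nM$ implies $m=n$. $E(M)$ idempotents; $m^\omega$ the idempotent power of $m$. $\Lambda(M)$ is the set of ideals $MeM$, $e\in E(M)$, ordered by inclusion; $\sigma(m)=Mm^\omega M$; $\sigma(m)\ge X$ means $X\subseteq MmM$. For $X\in\Lambda(M)$, $\nabla X=\{m\in M: X\not\subseteq MmM\}$ and $\nabla Y\nabla X=\{ab: a\in\nabla Y, b\in\nabla X\}$. The vertex $X$ is the one-dimensional $kM$-module where $m$ acts by $1$ if $\sigma(m)\ge X$ and by $0$ otherwise. The quiver has $\dim\mathrm{Ext}^1(S,T)$ arrows from $S$ to $T$. *)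

From HB Require Import structures.
From mathcomp Require Import all_boot all_order all_algebra.
Set Implicit Arguments. Unset Strict Implicit. Unset Printing Implicit Defensive.
Import GRing.Theory.

HB.structure Definition FinMonoid := {M of Monoid M & Finite M}.

Section MonoidDefs.
Variable M : FinMonoid.type.
Local Open Scope group_scope.

Definition rideal (m : M) : {set M} := [set m * x | x : M].
Definition Rtrivial : Prop := forall m n : M, rideal m = rideal n -> m = n.
Definition idem (e : M) : bool := e * e == e.
Definition jideal (m : M) : {set M} := [set x * m * y | x : M, y : M].
Definition Lambda : {set {set M}} := [set jideal e | e in [pred e | idem e]].
(* sigma(m) >= X  means  X subset MmM *)
Definition sigma_ge (X : {set M}) (m : M) : bool := X \subset jideal m.
Definition nabla (X : {set M}) : {set M} := [set m | ~~ sigma_ge X m].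
Definition nabla2 (Y X : {set M}) : {set M} :=
  [set a * b | a in nabla Y, b in nabla X].
Definition corner (eY eX : M) : {set M} := [set eY * m * eX | m : M].

Definition genrel (eY eX : M) : rel M := fun z z' =>
  let X := jideal eX in let Y := jideal eY in
  [&& z \in corner eY eX, z' \in corner eY eX &
   [exists m : M, exists n : M,
      [&& ~~ sigma_ge Y m, sigma_ge X n, z == eY * m * n * eX & z' == eY * m * eX]]
   || (z \in nabla2 Y X) && (z' \in nabla2 Y X)].

Definition equivZ (eY eX : M) : rel M :=
  connect (fun a b => genrel eY eX a b || genrel eY eX b a).

Definition classesZ (eY eX : M) : {set {set M}} :=
  [set [set z' in corner eY eX | equivZ eY eX z z'] | z in corner eY eX].

(* Z_{X,Y}: the classes other than the class of nabla Y nabla X *)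
Definition Zset (eY eX : M) : {set {set M}} :=
  [set C in classesZ eY eX | [disjoint C & nabla2 (jideal eY) (jideal eX)]].

Variable k : fieldType.
Local Open Scope ring_scope.

(* character of the one-dimensional module X *)
Definition chi (X : {set M}) (m : M) : k := if sigma_ge X m then 1 else 0.

(* Ext^1(X, Y) for the one-dimensional modules X (top) and Y (sub):
   extensions 0 -> Y -> E -> X -> 0 are representations
   m |-> [[chi Y m, d m], [0, chi X m]], i.e. d : M -> k with
   d (m n) = chi Y m * d n + d m * chi X n  (cocycles, a subspace Z1 of k^M);
   equivalent extensions differ by coboundaries c (chi Y - chi X). *)
Definition cocycle_defect (X Y : {set M}) (d : 'rV[k]_#|M|) : 'rV[k]_#|{: M * M}| :=
  \row_p (let mn := enum_val p in
          d 0 (enum_rank (mn.1 * mn.2)%g)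
          - chi Y mn.1 * d 0 (enum_rank mn.2) - d 0 (enum_rank mn.1) * chi X mn.2).

Definition cocycles (X Y : {set M}) := kermx (lin1_mx (cocycle_defect X Y)).
Definition coboundaries (X Y : {set M}) : 'rV[k]_#|M| :=
  \row_i (chi Y (enum_val i) - chi X (enum_val i)).

(* dim Ext^1(X, Y) = dim Z1 - dim B1 = number of arrows X -> Y in Q(kM) *)
Definition ext1_dim (X Y : {set M}) : nat :=
  (\rank (cocycles X Y) - \rank (cocycles X Y :&: coboundaries X Y)%MS)%N.

(* left representations of M on k^d (column vectors) *)
Definition is_rep (d : nat) (rho : M -> 'M[k]_d) : Prop :=
  rho 1%g = 1%:M /\ forall m n : M, rho (m * n)%g = rho m *m rho n.
(* irreducible: nonzero and no proper nonzero invariant subspace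
   (subspace = row space of U, invariance of column vectors u^T under rho m) *)
Definition irreducible (d : nat) (rho : M -> 'M[k]_d) : Prop :=
  (0 < d)%N /\ forall U : 'M[k]_d,
    (forall m, (U *m (rho m)^T <= U)%MS) -> U == 0 :> 'M[k]_d \/ row_full U.

(* the vertex set of Q(kM) is Lambda(M): the modules X (X in Lambda) are
   pairwise non-isomorphic one-dimensional modules and every simple module
   is isomorphic to one of them *)
Definition vertices_are_Lambda : Prop :=
  (forall X, X \in Lambda -> is_rep (fun m => (chi X m)%:M : 'M[k]_1))
  /\ (forall X Y, X \in Lambda -> Y \in Lambda -> (forall m, chi X m = chi Y m) -> X = Y)
  /\ (forall d (rho : M -> 'M[k]_d), is_rep rho -> irreducible rho ->
        d = 1%N /\ exists2 X, X \in Lambda & forall m, rho m = (chi X m)%:M).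

End MonoidDefs.

From HB Require Import structures.
From mathcomp Require Import all_boot all_order all_algebra.
From mathcomp Require Import ring.
Set Implicit Arguments. Unset Strict Implicit. Unset Printing Implicit Defensive.
Import GRing.Theory.

(** In a finite R-trivial monoid an idempotent [e] lies in [MmM] only if
    [e * m = e].  Hence [sigma(m) >= MeM] is multiplicative in [m], every
    [chi_X] is a representation, and an irreducible representation equals
    [chi_(MeM)] for an idempotent [e] generating a minimal ideal on which it
    does not vanish.

    [Ext^1(X, Y)] is computed on cocycles [d(mn) = chi_Y(m) d(n) + d(m) chi_X(n)].
    Such a [d] is determined by [d(e_X)], [d(e_Y)] and its restriction to
    [e_Y M e_X], where it is constant on the classes of the equivalence and
    vanishes on [nabla Y nabla X]; conversely every class of [Z_(X,Y)] carries
    a cocycle.  Moreover [d(e_X) = 0] when [Y] is contained in [X], and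
    [d(e_Y) = 0] when [X] is contained in [Y], which ties the value on the class
    of [e_Y e_X] to [d(e_X)].  Counting these parameters and dividing out the
    coboundary [chi_Y - chi_X], which is zero exactly when [X = Y], gives the
    two formulas. *)

Section Biorthogonal.
Local Open Scope ring_scope.

Lemma mxrank_biorthogonal (F : fieldType) n (Z : 'M[F]_n) (I : finType) (P : {set I})
    (p : I -> 'I_n) (b : I -> 'rV[F]_n) :
  (forall i, i \in P -> (b i <= Z)%MS) ->
  (forall i j, i \in P -> j \in P -> b i 0 (p j) = (i == j)%:R) ->
  (forall v : 'rV_n, (v <= Z)%MS -> (forall j, j \in P -> v 0 (p j) = 0) -> v = 0) ->
  \rank Z = #|P|.
Proof.
move=> b_sub b_dual Z_sep.
pose q (j : 'I_#|P|) := p (enum_val j); pose S : 'M[F]_(n, #|P|) := colsub q 1%:M.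
have mulS (v : 'rV_n) j : (v *m S) 0 j = v 0 (q j) by rewrite mulmx_colsub mulmx1 mxE.
pose B : 'M[F]_(#|P|, n) := \matrix_i b (enum_val i).
have BS1 : B *m S = 1%:M.
  apply/row_matrixP => i; apply/rowP => j.
  by rewrite row_mul mulS rowK b_dual ?enum_valP // (inj_eq enum_val_inj) !mxE.
have le_BZ : (B <= Z)%MS by apply/row_subP => i; rewrite rowK b_sub ?enum_valP.
have ZkerS0 : (Z :&: kermx S)%MS = 0.
  apply/eqP; rewrite -submx0; apply/row_subP => i; rewrite submx0.
  set v := row i _; have v_cap : (v <= Z :&: kermx S)%MS by apply: row_sub.
  have vS0 : v *m S = 0 by apply/sub_kermxP; apply: submx_trans v_cap (capmxSr _ _).
  apply/eqP/Z_sep => [|j Pj]; first exact: submx_trans v_cap (capmxSl _ _).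
  by rewrite -[j](enum_rankK_in Pj Pj) -mulS vS0 mxE.
apply/eqP; rewrite eqn_leq; apply/andP; split.
  by rewrite -(mxrank_mul_ker Z S) ZkerS0 mxrank0 addn0 rank_leq_col.
by rewrite -{1}(mxrank1 F #|P|) -BS1 (leq_trans (mxrankM_maxl _ _)) ?mxrankS.
Qed.

End Biorthogonal.

Section Ideals.
Variable M : FinMonoid.type.
Local Open Scope group_scope.
Implicit Types m x y z : M.

Lemma jidealP m z : reflect (exists x y, z = x * m * y) (z \in jideal m).
Proof.
by apply: (iffP imset2P) => [[x y _ _ ->]|[x [y ->]]]; [exists x, y | exists x y].
Qed.

Lemma jideal_refl m : m \in jideal m.
Proof. by apply/jidealP; exists 1, 1; rewrite mul1g mulg1. Qed.

Lemma jideal_mull x m z : z \in jideal m -> x * z \in jideal m.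
Proof. by case/jidealP=> a [b ->]; apply/jidealP; exists (x * a), b; rewrite !mulgA. Qed.

Lemma jideal_subset m z : z \in jideal m -> jideal z \subset jideal m.
Proof.
case/jidealP=> x [y ->]; apply/subsetP => _ /jidealP [a [b ->]].
by apply/jidealP; exists (a * x), (y * b); rewrite !mulgA.
Qed.

End Ideals.

Section RTrivialMonoid.
Variable M : FinMonoid.type.
Hypothesis RtrivM : Rtrivial M.
Local Open Scope group_scope.
Implicit Types a b c e m n s t x y z : M.

Lemma rtriv_mulg_fix a b c : a * b * c = a -> a * b = a.
Proof.
move=> abc_a; apply: RtrivM; apply/setP => z.
apply/imsetP/imsetP => [[x _ ->]|[x _ ->]]; first by exists (b * x); rewrite ?mulgA.
by exists (c * x); rewrite // -{1}abc_a !mulgA.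
Qed.

Lemma rtriv_idem_absorb e m : idem e -> e \in jideal m -> e * m = e.
Proof.
move=> /eqP ee /jidealP [x [y e_xmy]].
have exm : e * (x * m) = e by apply: (rtriv_mulg_fix (c := y)); rewrite -mulgA -e_xmy ee.
have ex : e * x = e.
  by apply: (rtriv_mulg_fix (c := m * e)); rewrite mulgA -(mulgA e x m) exm ee.
by rewrite -{1}ex -mulgA exm.
Qed.

Lemma rtriv_pow_fix z i j : i < j -> z ^+ j = z ^+ i -> z ^+ i.+1 = z ^+ i.
Proof.
move=> lt_ij zj_zi; rewrite expgSr; apply: (rtriv_mulg_fix (c := z ^+ (j - i.+1))).
by rewrite -expgSr -expgnDr subnKC.
Qed.

Lemma rtriv_aperiodic z : exists k, z ^+ k.+1 = z ^+ k.
Proof.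
pose f (i : 'I_#|M|.+1) := z ^+ i.
have /injectivePn [i [j neq_ij fij]] : ~~ injectiveb f.
  by apply/negP => /injectiveP/leq_card; rewrite card_ord ltnn.
have [lt_ij|lt_ji|eq_ij] := ltngtP i j.
- by exists i; apply: rtriv_pow_fix lt_ij _.
- by exists j; apply: rtriv_pow_fix lt_ji _.
- by rewrite (val_inj eq_ij) eqxx in neq_ij.
Qed.

Lemma mulg_fix_pow s t k : s * t = s -> s * t ^+ k = s.
Proof.
by move=> st_s; elim: k => [|k IHk]; rewrite ?mulg1 // expgSr mulgA IHk.
Qed.

Lemma rtriv_idem_pow z : exists k, idem (z ^+ k.+1).
Proof.
have [k zk] := rtriv_aperiodic z; exists k.
have zk_stable j : z ^+ (k + j) = z ^+ k.
  by elim: j => [|j IHj]; rewrite ?addn0 // addnS expgSr IHj -expgSr zk.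
by rewrite /idem -expgnDr addSn -addnS zk_stable zk.
Qed.

Lemma rtriv_jideal_fix s t : s \in jideal (s * t) -> s * t = s.
Proof.
case/jidealP=> x [y s_def]; apply: (rtriv_mulg_fix (c := y)).
pose w := t * y; have s_xsw : s = x * s * w by rewrite {1}s_def !mulgA.
have s_pow j : s = x ^+ j * s * w ^+ j.
  elim: j => [|j IHj]; first by rewrite mul1g mulg1.
  rewrite expgSr expgS.
  have -> : x ^+ j * x * s * (w * w ^+ j) = x ^+ j * (x * s * w) * w ^+ j by rewrite !mulgA.
  by rewrite -s_xsw.
have [j wj] := rtriv_aperiodic w.
by rewrite -mulgA -/w {1}(s_pow j) -mulgA -expgSr wj -s_pow.
Qed.

Lemma sigma_ge_idemE e m : idem e -> sigma_ge (jideal e) m = (e * m == e).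
Proof.
move=> idem_e; apply/idP/eqP => [le_em|em_e].
  by apply: rtriv_idem_absorb => //; apply: (subsetP le_em); apply: jideal_refl.
by apply/jideal_subset/jidealP; exists e, 1; rewrite mulg1 em_e.
Qed.

Lemma sigma_ge_idemM e m n : idem e ->
  sigma_ge (jideal e) (m * n) = sigma_ge (jideal e) m && sigma_ge (jideal e) n.
Proof.
move=> idem_e; rewrite !sigma_ge_idemE //.
apply/eqP/andP => [emn_e|[/eqP em_e /eqP en_e]]; last by rewrite mulgA em_e en_e.
have em_e : e * m = e.
  by apply: rtriv_idem_absorb => //; apply/jidealP; exists e, n; rewrite -mulgA emn_e.
by split; apply/eqP; rewrite // -{1}em_e -mulgA.
Qed.

Lemma chi_idemM (k : fieldType) e m n : idem e ->
  chi k (jideal e) (m * n) = (chi k (jideal e) m * chi k (jideal e) n)%R.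
Proof.
by move=> idem_e; rewrite /chi sigma_ge_idemM //; do 2!case: sigma_ge; rewrite ?mulr1 ?mulr0.
Qed.

End RTrivialMonoid.

Section IrreducibleRepresentation.
Variables (M : FinMonoid.type) (k : fieldType) (d : nat) (rho : M -> 'M[k]_d).
Hypotheses (RtrivM : Rtrivial M) (rho_rep : is_rep rho) (rho_irr : irreducible rho).
Local Open Scope ring_scope.

Lemma rep_mul (m n : M) : rho (m * n)%g = rho m *m rho n.
Proof. by case: rho_rep. Qed.

Lemma rep1_neq0 : rho 1%g != 0.
Proof.
rewrite rho_rep.1; apply: contraTneq rho_irr.1 => one_0.
by rewrite -(mxrank1 k d) one_0 mxrank0.
Qed.

Lemma rep_jideal_separates (s : M) (B : 'M[k]_d) :
  rho s != 0 -> (forall t, t \in jideal s -> B *m rho t = 0) -> B = 0.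
Proof.
move=> nz_s B_ann; pose U := (\sum_(t in jideal s) (rho t)^T)%MS.
have rho_subU t : t \in jideal s -> ((rho t)^T <= U)%MS by move=> Jt; apply: (sumsmx_sup t).
have U_stable m : (U *m (rho m)^T <= U)%MS.
  rewrite sumsmxMr; apply/sumsmx_subP => t Jt.
  by rewrite -trmx_mul -rep_mul rho_subU ?jideal_mull.
have [/eqP U0 | U_full] := rho_irr.2 U U_stable.
  by have := rho_subU s (jideal_refl s); rewrite U0 submx0 trmx_eq0 (negPf nz_s).
rewrite -sub1mx in U_full; apply: trmx_inj; apply/eqP.
rewrite trmx0 -submx0 -[B^T]mul1mx (submx_trans (submxMr _ U_full)) //.
by rewrite sumsmxMr; apply/sumsmx_subP => t Jt; rewrite -trmx_mul B_ann // trmx0.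
Qed.

Section MinimalIdempotent.
Variable g : M.
Hypotheses (idem_g : idem g) (nz_g : rho g != 0).
Hypothesis min_g : forall u, rho u != 0 -> jideal u \subset jideal g -> jideal u = jideal g.

Lemma rep_minimal_idem_vanish m : (g * m)%g != g -> rho m = 0.
Proof.
move=> gm_neq_g; apply: (rep_jideal_separates nz_g) => u Ju; rewrite -rep_mul.
apply: contraNeq gm_neq_g => nz_mu; apply/eqP; apply: rtriv_idem_absorb => //.
have Jmu : jideal (m * u)%g \subset jideal g by apply/jideal_subset/jideal_mull.
have Jmu_m : jideal (m * u)%g \subset jideal m.
  by apply/jideal_subset/jidealP; exists 1%g, u; rewrite mul1g.
by apply: (subsetP Jmu_m); rewrite (min_g nz_mu Jmu) jideal_refl.
Qed.

Lemma rep_minimal_idem_1 : rho g = 1%:M.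
Proof.
pose K := kermx (rho g)^T.
have K_stable m : (K *m (rho m)^T <= K)%MS.
  rewrite sub_kermx -mulmxA -trmx_mul -rep_mul.
  have [->|gm_neq_g] := eqVneq (g * m)%g g; first by rewrite mulmx_ker.
  by rewrite rep_mul (rep_minimal_idem_vanish gm_neq_g) mulmx0 trmx0 mulmx0.
have [/eqP K0 | K_full] := rho_irr.2 K K_stable.
  have unit_g : rho g \in unitmx by rewrite -unitmx_tr -row_free_unit -kermx_eq0 -/K K0.
  by rewrite -[LHS](mulmxK unit_g) -rep_mul (eqP idem_g) mulmxV.
move: K_full; rewrite -sub1mx sub_kermx mul1mx trmx_eq0 => /eqP g0.
by move: nz_g; rewrite g0 eqxx.
Qed.

Lemma rep_minimal_idem_chi m : rho m = (chi k (jideal g) m)%:M.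
Proof.
rewrite /chi sigma_ge_idemE //.
have [gm_g|gm_neq_g] := eqVneq (g * m)%g g.
  by rewrite -[rho m]mul1mx -rep_minimal_idem_1 -rep_mul gm_g rep_minimal_idem_1.
by rewrite (rep_minimal_idem_vanish gm_neq_g) raddf0.
Qed.

End MinimalIdempotent.

Lemma rep_minimal_idem : exists2 g, idem g & [/\ rho g != 0 &
  forall u, rho u != 0 -> jideal u \subset jideal g -> jideal u = jideal g].
Proof.
case: (@arg_minnP _ 1%g (fun s => rho s != 0) (fun s => #|jideal s|) rep1_neq0).
move=> s nz_s min_s.
have {}min_s u : rho u != 0 -> jideal u \subset jideal s -> jideal u = jideal s.
  by move=> nz_u le_us; apply/eqP; rewrite eqEcard le_us min_s.
have [t Jt nz_st] : exists2 t, t \in jideal s & rho (s * t)%g != 0.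
  apply/exists_inP; apply: contraNT (nz_s); rewrite negb_exists_in => /forall_inP st0.
  by apply/eqP/(rep_jideal_separates nz_s) => t Jt; rewrite -rep_mul; apply/eqP/negbNE/st0.
have st_s : (s * t = s)%g.
  have le_st_s : jideal (s * t)%g \subset jideal s.
    by apply/jideal_subset/jidealP; exists 1%g, t; rewrite mul1g.
  by apply: rtriv_jideal_fix => //; rewrite (min_s _ nz_st le_st_s) jideal_refl.
have [i idem_ti] := rtriv_idem_pow RtrivM t; set g := (t ^+ i.+1)%g in idem_ti *.
have sg_s : (s * g = s)%g by apply: mulg_fix_pow.
have Jg : jideal g = jideal s.
  apply/eqP; rewrite eqEsubset; apply/andP; split; apply: jideal_subset.
    apply: (subsetP (jideal_subset Jt)); apply/jidealP.
    by exists (t ^+ i)%g, 1%g; rewrite mulg1 /g expgSr.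
  by apply/jidealP; exists s, 1%g; rewrite mulg1 sg_s.
exists g => //; rewrite Jg; split=> //.
by apply: contraNneq nz_s => g0; rewrite -sg_s rep_mul g0 mulmx0.
Qed.

Lemma irr_rep_character : exists2 e, idem e & forall m, rho m = (chi k (jideal e) m)%:M.
Proof.
have [g idem_g [nz_g min_g]] := rep_minimal_idem.
by exists g => // m; apply: rep_minimal_idem_chi.
Qed.

End IrreducibleRepresentation.

Section Vertices.
Variables (M : FinMonoid.type) (k : fieldType).
Local Open Scope ring_scope.

Lemma chi_idem_rep (e : M) : Rtrivial M -> idem e ->
  is_rep (fun m => (chi k (jideal e) m)%:M : 'M[k]_1).
Proof.
move=> RtrivM idem_e; split=> [|m n]; last by rewrite chi_idemM // scalar_mxM.
have le_e1 : sigma_ge (jideal e) 1%g.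
  by apply/jideal_subset/jidealP; exists e, 1%g; rewrite !mulg1.
by rewrite /chi le_e1.
Qed.

Lemma chi_jideal_self (e : M) : chi k (jideal e) e = 1.
Proof. by rewrite /chi /sigma_ge subxx. Qed.

Lemma chi_eq1 (X : {set M}) (m : M) : (chi k X m == 1) = sigma_ge X m.
Proof. by rewrite /chi; case: sigma_ge; rewrite ?eqxx // eq_sym oner_eq0. Qed.

Lemma irreducible_scalar_dim1 d (rho : M -> 'M[k]_d) (c : M -> k) :
  irreducible rho -> (forall m, rho m = (c m)%:M) -> d = 1%N.
Proof.
move=> [d_gt0 rho_irr] rho_scalar; pose U : 'M[k]_d := pid_mx 1.
have rkU : \rank U = 1%N by rewrite rank_pid_mx.
have U_stable m : (U *m (rho m)^T <= U)%MS.
  by rewrite rho_scalar tr_scalar_mx mul_mx_scalar scalemx_sub.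
have [/eqP U0|] := rho_irr U U_stable; first by rewrite U0 mxrank0 in rkU.
by rewrite /row_full rkU => /eqP.
Qed.

Lemma Rtrivial_vertices_are_Lambda : Rtrivial M -> vertices_are_Lambda M k.
Proof.
move=> RtrivM; split; [|split].
- by move=> _ /imsetP [e idem_e ->]; apply: chi_idem_rep.
- move=> _ _ /imsetP [e _ ->] /imsetP [f _ ->] chi_ef.
  have le_ef : sigma_ge (jideal e) f by rewrite -chi_eq1 chi_ef chi_jideal_self.
  have le_fe : sigma_ge (jideal f) e by rewrite -chi_eq1 -chi_ef chi_jideal_self.
  by apply/eqP; rewrite eqEsubset; apply/andP.
- move=> d rho rho_rep rho_irr.
  have [e idem_e rho_chi] := irr_rep_character RtrivM rho_rep rho_irr.
  split; first exact: irreducible_scalar_dim1 rho_irr rho_chi.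
  by exists (jideal e) => //; apply: imset_f.
Qed.

End Vertices.

Section Cocycles.
Variables (M : FinMonoid.type) (k : fieldType).
Local Open Scope ring_scope.
Implicit Types (X Y : {set M}) (m n : M) (v w : 'rV[k]_#|M|).

Definition row_at v m := v 0 (enum_rank m).
Definition row_of (f : M -> k) : 'rV[k]_#|M| := \row_i f (enum_val i).

Lemma row_ofK f m : row_at (row_of f) m = f m.
Proof. by rewrite /row_at mxE enum_rankK. Qed.

Lemma row_atB v w m : row_at (v - w) m = row_at v m - row_at w m.
Proof. by rewrite /row_at !mxE. Qed.

Lemma row_at0 m : row_at 0 m = 0.
Proof. by rewrite /row_at mxE. Qed.

Lemma row_at_eq0 v : (forall m, row_at v m = 0) -> v = 0.
Proof.
by move=> v0; apply/rowP => i; have := v0 (enum_val i); rewrite /row_at enum_valK mxE.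
Qed.

Definition is_cocycle X Y v := forall m n,
  row_at v (m * n)%g = chi k Y m * row_at v n + row_at v m * chi k X n.

Lemma cocycle_defect_linear X Y : linear (@cocycle_defect M k X Y).
Proof. by move=> a u v; apply/rowP => p; rewrite /cocycle_defect !mxE; ring. Qed.

HB.instance Definition _ X Y :=
  GRing.isLinear.Build k _ _ _ (@cocycle_defect M k X Y) (cocycle_defect_linear X Y).

Lemma sub_cocyclesP X Y v : (v <= cocycles k X Y)%MS <-> is_cocycle X Y v.
Proof.
rewrite sub_kermx mul_rV_lin1; split => [/eqP/rowP v_def m n | v_cocycle].
  have := v_def (enum_rank (m, n)); rewrite !mxE enum_rankK /= => defect0.
  by apply/eqP; rewrite -subr_eq0 -defect0 /row_at; apply/eqP; ring.
apply/eqP/rowP => p; rewrite !mxE.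
by have := v_cocycle (enum_val p).1 (enum_val p).2; rewrite /row_at => ->; ring.
Qed.

Lemma row_at_coboundaries X Y m :
  row_at (coboundaries k X Y) m = chi k Y m - chi k X m.
Proof. by rewrite /row_at mxE enum_rankK. Qed.

Lemma coboundaries_cocycle X Y : Rtrivial M -> X \in Lambda M -> Y \in Lambda M ->
  is_cocycle X Y (coboundaries k X Y).
Proof.
move=> RtrivM /imsetP [eX idem_eX ->] /imsetP [eY idem_eY ->] m n.
by rewrite !row_at_coboundaries !chi_idemM //; ring.
Qed.

End Cocycles.

Section ExtCorner.
Variables (M : FinMonoid.type) (k : fieldType) (eX eY : M).
Hypotheses (RtrivM : Rtrivial M) (idem_eX : idem eX) (idem_eY : idem eY).
Local Notation X := (jideal eX).
Local Notation Y := (jideal eY).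
Local Notation C := (corner eY eX).
Local Notation N2 := (nabla2 Y X).
Local Notation equiv := (equivZ eY eX).
Local Notation chiX := (chi k X).
Local Notation chiY := (chi k Y).
Local Open Scope ring_scope.
Implicit Types (a b m n z : M) (K L : {set M}).

Lemma chiXM m n : chiX (m * n)%g = chiX m * chiX n. Proof. exact: chi_idemM. Qed.
Lemma chiYM m n : chiY (m * n)%g = chiY m * chiY n. Proof. exact: chi_idemM. Qed.

Definition sandwich m := (eY * m * eX)%g.

Lemma cornerP z : reflect (exists m, z = sandwich m) (z \in C).
Proof. by apply: (iffP imsetP) => [[m _ ->]|[m ->]]; exists m. Qed.

Lemma sandwich_corner m : sandwich m \in C.
Proof. by apply/cornerP; exists m. Qed.

Lemma sandwich_id z : z \in C -> sandwich z = z.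
Proof.
by case/cornerP=> m ->; rewrite /sandwich -!mulgA (eqP idem_eX) !mulgA (eqP idem_eY).
Qed.

Lemma sandwich_eX : sandwich eX = sandwich 1%g.
Proof. by rewrite /sandwich mulg1 -mulgA (eqP idem_eX). Qed.

Lemma chiX_corner z : z \in C -> ~~ (X \subset Y) -> chiX z = 0.
Proof. by case/cornerP=> m -> /negPf XY; rewrite !chiXM /chi [sigma_ge _ eY]XY !mul0r. Qed.

Lemma chiY_corner z : z \in C -> ~~ (Y \subset X) -> chiY z = 0.
Proof. by case/cornerP=> m -> /negPf YX; rewrite !chiYM /chi [sigma_ge _ eX]YX !mulr0. Qed.

Lemma nabla2P z :
  reflect (exists a b, [/\ ~~ sigma_ge Y a, ~~ sigma_ge X b & z = (a * b)%g]) (z \in N2).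
Proof.
apply: (iffP imset2P) => [[a b Ya Xb ->]|[a [b [Ya Xb ->]]]].
  by exists a, b; move: Ya Xb; rewrite !inE.
by exists a b; rewrite ?inE.
Qed.

Lemma sandwich_nabla2 m n : ~~ sigma_ge Y m -> ~~ sigma_ge X n -> sandwich (m * n)%g \in N2.
Proof.
move=> Ym Xn; apply/nabla2P; exists (eY * m)%g, (n * eX)%g.
rewrite !sigma_ge_idemM // (negPf Ym) (negPf Xn) andbF.
by split=> //; rewrite /sandwich !mulgA.
Qed.

Lemma genrelP a b : genrel eY eX a b ->
  (exists m n, [/\ ~~ sigma_ge Y m, sigma_ge X n, a = sandwich (m * n)%g & b = sandwich m])
  \/ (a \in N2 /\ b \in N2).
Proof.
case/and3P=> _ _ /orP [/existsP [m /existsP [n /and4P [Ym Xn /eqP -> /eqP ->]]]|/andP []].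
  by left; exists m, n; rewrite /sandwich !mulgA.
by right.
Qed.

Lemma genrel_sandwich m n : ~~ sigma_ge Y m -> sigma_ge X n ->
  genrel eY eX (sandwich (m * n)%g) (sandwich m).
Proof.
move=> Ym Xn; rewrite /genrel !sandwich_corner; apply/orP; left.
by apply/existsP; exists m; apply/existsP; exists n; rewrite Ym Xn /sandwich !mulgA !eqxx.
Qed.

Lemma equivZ_invariant (T : Type) (f : M -> T) :
  (forall a b, genrel eY eX a b -> f a = f b) -> forall a b, equiv a b -> f a = f b.
Proof.
move=> f_gen a b /connectP [p]; elim: p a => [|c p IHp] a /=; first by move=> _ ->.
case/andP=> gen_ac /IHp IHc /IHc <-.
by case/orP: gen_ac => /f_gen ->.
Qed.

Section CornerCocycle.
Variable v : 'rV[k]_#|M|.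
Hypothesis v_cocycle : is_cocycle X Y v.
Local Notation d := (row_at v).

Lemma cocycle_nabla2 z : z \in N2 -> d z = 0.
Proof.
case/nabla2P=> a [b [Ya Xb ->]].
by rewrite v_cocycle /chi (negPf Ya) (negPf Xb) mul0r mulr0 addr0.
Qed.

Lemma cocycle_genrel a b : genrel eY eX a b -> d a = d b.
Proof.
case/genrelP=> [[m [n [Ym Xn -> ->]]] | [/cocycle_nabla2 -> /cocycle_nabla2 ->]] //.
rewrite /sandwich !v_cocycle !chiYM !chiXM !chi_jideal_self.
by rewrite /chi (negPf Ym) Xn; ring.
Qed.

Lemma cocycle_equivZ a b : equiv a b -> d a = d b.
Proof. exact: (equivZ_invariant cocycle_genrel). Qed.

Lemma cocycle_sandwich m : d m = d (sandwich m) - chiY m * d eX - d eY * chiX m.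
Proof. by rewrite /sandwich -mulgA !v_cocycle chiXM !chi_jideal_self; ring. Qed.

Lemma cocycle_sandwich1 : d (sandwich 1%g) = d eX + d eY.
Proof. by rewrite /sandwich mulg1 v_cocycle !chi_jideal_self mul1r mulr1. Qed.

Lemma cocycle_eX : Y \subset X -> d eX = 0.
Proof.
move=> YX; have := v_cocycle eX eX.
rewrite (eqP idem_eX) chi_jideal_self mulr1 /chi /sigma_ge YX mul1r => dd.
by apply: (addrI (d eX)); rewrite addr0 -dd.
Qed.

Lemma cocycle_eY : X \subset Y -> d eY = 0.
Proof.
move=> XY; have := v_cocycle eY eY.
rewrite (eqP idem_eY) chi_jideal_self mul1r /chi /sigma_ge XY mulr1 => dd.
by apply: (addrI (d eY)); rewrite addr0 -dd.
Qed.

End CornerCocycle.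

Lemma chiX_genrel a b : genrel eY eX a b -> chiX a = chiX b.
Proof.
case/genrelP=> [[m [n [_ Xn -> ->]]] |
                [/nabla2P [a1 [b1 [_ Xb1 ->]]] /nabla2P [a2 [b2 [_ Xb2 ->]]]]].
  by rewrite !chiXM [chiX n]/chi Xn mulr1.
by rewrite !chiXM [chiX b1]/chi [chiX b2]/chi (negPf Xb1) (negPf Xb2) !mulr0.
Qed.

Definition classZ z := [set w in C | equiv z w].

Lemma equivZ_sym a b : equiv a b = equiv b a.
Proof. by apply: sym_connect_sym => x y; apply: orbC. Qed.

Lemma classZ_refl z : z \in C -> z \in classZ z.
Proof. by move=> Cz; rewrite inE Cz; apply: connect0. Qed.

Lemma classZ_classesZ z : z \in C -> classZ z \in classesZ eY eX.
Proof. exact: imset_f. Qed.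

Lemma classesZ_classZ K z : K \in classesZ eY eX -> z \in K -> K = classZ z.
Proof.
case/imsetP=> w _ -> /[!inE] /andP [_ wz]; apply/setP => u; rewrite !inE.
have zw : equiv z w by rewrite equivZ_sym.
by apply/andb_id2l => _; apply/idP/idP => [/(connect_trans zw) | /(connect_trans wz)].
Qed.

Lemma classesZ_genrel K a b :
  K \in classesZ eY eX -> genrel eY eX a b -> (a \in K) = (b \in K).
Proof.
case/imsetP=> z _ -> gen_ab; have /and3P [Ca Cb _] := gen_ab.
have ab : equiv a b by apply: connect1; rewrite gen_ab.
have ba : equiv b a by rewrite equivZ_sym.
rewrite !inE Ca Cb; apply/idP/idP => za.
  exact: connect_trans za ab.
exact: connect_trans za ba.
Qed.

Definition class_rep K := odflt eX [pick z in K].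

Lemma class_rep_mem K : K \in classesZ eY eX -> class_rep K \in K.
Proof.
by case/imsetP=> z Cz ->; rewrite /class_rep; case: pickP => [//|/(_ z)]; rewrite classZ_refl.
Qed.

Lemma class_rep_corner K : K \in classesZ eY eX -> class_rep K \in C.
Proof.
by move=> cK; have := class_rep_mem cK; case/imsetP: cK => z _ ->; rewrite inE => /andP [].
Qed.

Lemma mem_class_rep K L : K \in classesZ eY eX -> L \in classesZ eY eX ->
  (class_rep L \in K) = (K == L).
Proof.
move=> cK cL; apply/idP/eqP => [repL_K | ->]; last exact: class_rep_mem.
by rewrite (classesZ_classZ cK repL_K) -(classesZ_classZ cL (class_rep_mem cL)).
Qed.

Definition class_cocycle K :=
  row_of (fun m => (sandwich m \in K)%:R - (sandwich 1%g \in K)%:R * chiX m).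

Lemma class_cocycleP K : K \in Zset eY eX -> is_cocycle X Y (class_cocycle K).
Proof.
rewrite inE => /andP [cK K_N2] m n; rewrite !row_ofK chiXM.
have [Ym|nYm] := boolP (sigma_ge Y m).
  have eYm : (eY * m = eY)%g by apply/eqP; rewrite -sigma_ge_idemE.
  have -> : sandwich (m * n)%g = sandwich n by rewrite /sandwich mulgA eYm.
  have -> : sandwich m = sandwich 1%g by rewrite /sandwich eYm mulg1.
  by rewrite /chi Ym; ring.
have [Xn|nXn] := boolP (sigma_ge X n).
  by rewrite (classesZ_genrel cK (genrel_sandwich nYm Xn)) /chi (negPf nYm) Xn; ring.
by rewrite (disjointFl K_N2 (sandwich_nabla2 nYm nXn)) /chi (negPf nYm) (negPf nXn) /=; ring.
Qed.

Lemma classZ1_Zset : X \subset Y -> classZ (sandwich 1%g) \in Zset eY eX.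
Proof.
move=> XY; rewrite inE classZ_classesZ ?sandwich_corner //=.
rewrite disjoint_subset; apply/subsetP => z /[!inE] /andP [_ /(equivZ_invariant chiX_genrel)].
move=> chi_z; apply/negP => /nabla2P [a [b [_ Xb z_ab]]]; move: chi_z; rewrite z_ab.
rewrite /sandwich mulg1 !chiXM !chi_jideal_self /chi [sigma_ge _ eY]XY (negPf Xb).
by rewrite mulr1 mulr0 => /eqP; rewrite oner_eq0.
Qed.

Definition free_classes :=
  [set K in Zset eY eX | ~~ ((X \subset Y) && (sandwich 1%g \in K))].

Lemma free_classes_classesZ K : K \in free_classes -> K \in classesZ eY eX.
Proof. by rewrite !inE => /andP [/andP []]. Qed.

Lemma card_Zset : #|Zset eY eX| = (#|free_classes| + (X \subset Y))%N.
Proof.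
have [XY|nXY] := boolP (X \subset Y); last first.
  by rewrite addn0; apply: eq_card => K; rewrite !inE (negPf nXY) andbT.
rewrite (cardsD1 (classZ (sandwich 1%g))) classZ1_Zset // addnC; congr (_ + _)%N.
apply: eq_card => K; rewrite !inE XY andbC; case cK: (K \in classesZ eY eX) => //=.
congr (_ && ~~ _); apply/eqP/idP => [->|/(classesZ_classZ cK)//].
exact/classZ_refl/sandwich_corner.
Qed.

Definition basis_index : {set option {set M}} :=
  Some @: free_classes :|: (if Y \subset X then set0 else [set None]).

Lemma mem_basis_index o :
  (o \in basis_index) = if o is Some K then K \in free_classes else ~~ (Y \subset X).
Proof.
rewrite inE; case: o => [K|].
  by rewrite (mem_imset _ _ (@Some_inj _)); case: ifP; rewrite ?inE ?orbF.
have -> : (None \in Some @: free_classes) = false by apply/imsetP => -[].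
by case: ifP; rewrite ?inE.
Qed.

Lemma card_basis_index : #|basis_index| = (#|free_classes| + ~~ (Y \subset X))%N.
Proof.
rewrite /basis_index; case: ifP => _ /=.
  by rewrite setU0 (card_imset _ (@Some_inj _)) addn0.
rewrite setUC cardsU1 (card_imset _ (@Some_inj _)) addnC.
by have -> : (None \in Some @: free_classes) = false by apply/imsetP => -[].
Qed.

Definition basis_elt (o : option {set M}) := if o is Some K then class_rep K else eX.

(* Off the class of [e_Y e_X], the first summand agrees on the corner with the
   coboundary, whose value there is [- chi_X]. *)
Definition eX_cocycle :=
  (if X \subset Y then class_cocycle (classZ (sandwich 1%g)) else 0) - coboundaries k X Y.

Definition basis_vec (o : option {set M}) :=
  if o is Some K then class_cocycle K else eX_cocycle.

Lemma coboundaries_sub : (coboundaries k X Y <= cocycles k X Y)%MS.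
Proof. by apply/sub_cocyclesP/coboundaries_cocycle; rewrite ?imset_f. Qed.

Lemma basis_vec_cocycle o : o \in basis_index -> (basis_vec o <= cocycles k X Y)%MS.
Proof.
rewrite mem_basis_index; case: o => [K freeK | _] /=.
  by apply/sub_cocyclesP/class_cocycleP; move: freeK; rewrite inE => /andP [].
rewrite /eX_cocycle addmx_sub ?eqmx_opp ?coboundaries_sub //.
case: ifP => [XY|_]; last exact: sub0mx.
by apply/sub_cocyclesP/class_cocycleP/classZ1_Zset.
Qed.

Lemma class_cocycle_eX K : row_at (class_cocycle K) eX = 0.
Proof. by rewrite row_ofK sandwich_eX chi_jideal_self mulr1 subrr. Qed.

Lemma class_cocycle_rep K L : K \in free_classes -> L \in free_classes ->
  row_at (class_cocycle K) (class_rep L) = (K == L)%:R.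
Proof.
move=> freeK freeL; have cK := free_classes_classesZ freeK.
have cL := free_classes_classesZ freeL; have CL := class_rep_corner cL.
rewrite row_ofK sandwich_id // mem_class_rep //.
suff -> : (sandwich 1%g \in K)%:R * chiX (class_rep L) = 0 by rewrite subr0.
have [XY|nXY] := boolP (X \subset Y); last by rewrite chiX_corner ?mulr0.
by move: freeK; rewrite inE XY /= => /andP [_ /negPf ->]; rewrite mul0r.
Qed.

Lemma eX_cocycle_eX : ~~ (Y \subset X) -> row_at eX_cocycle eX = 1.
Proof.
move=> nYX; rewrite row_atB row_at_coboundaries chi_jideal_self /chi /sigma_ge (negPf nYX).
by case: ifP => _; rewrite ?class_cocycle_eX ?row_at0 add0r opprB subr0.
Qed.

Lemma eX_cocycle_rep L : ~~ (Y \subset X) -> L \in free_classes ->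
  row_at eX_cocycle (class_rep L) = 0.
Proof.
move=> nYX freeL; have cL := free_classes_classesZ freeL; have CL := class_rep_corner cL.
rewrite /eX_cocycle row_atB row_at_coboundaries (chiY_corner CL nYX) sub0r opprK.
have [XY|nXY] := boolP (X \subset Y); last by rewrite row_at0 (chiX_corner CL nXY) addr0.
have C1 := sandwich_corner 1%g.
rewrite row_ofK sandwich_id // mem_class_rep ?classZ_classesZ // classZ_refl // mul1r.
have -> : (classZ (sandwich 1%g) == L) = false.
  by apply: contraTF freeL => /eqP <-; rewrite inE XY classZ_refl ?andbF.
by rewrite sub0r addNr.
Qed.

Lemma basis_vec_dual i j : i \in basis_index -> j \in basis_index ->
  row_at (basis_vec i) (basis_elt j) = (i == j)%:R.
Proof.
rewrite !mem_basis_index; case: i => [K|]; case: j => [L|] /= iK jL.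
- by rewrite class_cocycle_rep // (inj_eq (@Some_inj _)).
- exact: class_cocycle_eX.
- exact: eX_cocycle_rep.
- exact: eX_cocycle_eX.
Qed.

Lemma cocycle_corner_vanish (v : 'rV[k]_#|M|) : is_cocycle X Y v -> row_at v eX = 0 ->
  (forall K, K \in free_classes -> row_at v (class_rep K) = 0) ->
  forall z, z \in C -> row_at v z = 0.
Proof.
move=> v_cocycle v_eX v_rep z Cz; have cz := classZ_classesZ Cz.
have equiv_cls w : w \in classZ z -> row_at v z = row_at v w.
  by rewrite inE => /andP [_ /(cocycle_equivZ v_cocycle)].
have [disj | /pred0Pn [w /andP [zw wN2]]] := boolP [disjoint classZ z & N2]; last first.
  by rewrite (equiv_cls w) // cocycle_nabla2.
have [/andP [XY s1z] | not_s1z] := boolP ((X \subset Y) && (sandwich 1%g \in classZ z)).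
  by rewrite (equiv_cls _ s1z) cocycle_sandwich1 // v_eX cocycle_eY // addr0.
have free_z : classZ z \in free_classes by rewrite inE not_s1z andbT inE cz disj.
by rewrite (equiv_cls _ (class_rep_mem cz)) (v_rep _ free_z).
Qed.

Lemma cocycle_separation (v : 'rV[k]_#|M|) : (v <= cocycles k X Y)%MS ->
  (forall j, j \in basis_index -> row_at v (basis_elt j) = 0) -> v = 0.
Proof.
move=> /sub_cocyclesP v_cocycle v_basis.
have v_eX : row_at v eX = 0.
  have [YX|nYX] := boolP (Y \subset X); first exact: cocycle_eX.
  by apply: (v_basis None); rewrite mem_basis_index.
have v_corner z : z \in C -> row_at v z = 0.
  apply: (cocycle_corner_vanish v_cocycle v_eX) => K freeK.
  by apply: (v_basis (Some K)); rewrite mem_basis_index.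
have v_eY : row_at v eY = 0.
  by have := v_corner _ (sandwich_corner 1%g); rewrite cocycle_sandwich1 // v_eX add0r.
apply: row_at_eq0 => m; rewrite (cocycle_sandwich v_cocycle) v_corner ?sandwich_corner //.
by rewrite v_eX v_eY mulr0 mul0r !subr0.
Qed.

Lemma rank_cocycles : \rank (cocycles k X Y) = #|basis_index|.
Proof.
apply: (mxrank_biorthogonal (p := enum_rank \o basis_elt) (b := basis_vec)).
- exact: basis_vec_cocycle.
- exact: basis_vec_dual.
- by move=> v /cocycle_separation v0 v_basis; apply: v0 => j /v_basis.
Qed.

Lemma coboundaries_eq0 : (coboundaries k X Y == 0) = (X \subset Y) && (Y \subset X).
Proof.
apply/eqP/andP => [cob0 | [XY YX]].
  have := congr1 (fun w => row_at w eY) cob0; have := congr1 (fun w => row_at w eX) cob0.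
  rewrite !row_at_coboundaries !row_at0 !chi_jideal_self => /eqP YX /eqP XY.
  by move: YX XY; rewrite !subr_eq0 [1 == _]eq_sym !chi_eq1.
have XeqY : X = Y by apply/eqP; rewrite eqEsubset XY.
by apply/rowP => i; rewrite !mxE XeqY subrr.
Qed.

Lemma rank_cocycles_cap_coboundaries :
  \rank (cocycles k X Y :&: coboundaries k X Y)%MS = ~~ ((X \subset Y) && (Y \subset X)).
Proof.
by rewrite (eqmx_rank (introT eqmxP (capmx_idPr coboundaries_sub))) rank_rV coboundaries_eq0.
Qed.

Lemma ext1_dim_corner : ext1_dim k X Y =
  if ~~ (X \subset Y) && ~~ (Y \subset X) then #|Zset eY eX| else (#|Zset eY eX| - 1)%N.
Proof.
rewrite /ext1_dim rank_cocycles rank_cocycles_cap_coboundaries card_basis_index card_Zset.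
by case: (X \subset Y); case: (Y \subset X); rewrite /= ?addn0 ?addn1 ?subn0 ?subn1.
Qed.

End ExtCorner.

Theorem mainTheorem9 (M : FinMonoid.type) (k : fieldType) :
  Rtrivial M ->
  vertices_are_Lambda M k /\
  forall eX eY : M, idem eX -> idem eY ->
    let X := jideal eX in
    let Y := jideal eY in
    (~~ (X \subset Y) && ~~ (Y \subset X) ->
       ext1_dim k X Y = #|Zset eY eX|) /\
    (~~ (~~ (X \subset Y) && ~~ (Y \subset X)) ->
       ext1_dim k X Y = (#|Zset eY eX| - 1)%N).
Proof.
move=> RtrivM; split; first exact: Rtrivial_vertices_are_Lambda.
move=> eX eY idem_eX idem_eY /=; rewrite (ext1_dim_corner k RtrivM idem_eX idem_eY).
by split=> [->|/negPf ->].
Qed.
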